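(* Let $\varepsilon>0$ be a given security threshold (written $\mathsf{negl}(\lambda)$ in the paper) and let $\eta\in\mathbb{Z}^+$ satisfy $1/\eta<\varepsilon$. In the setting described in the context, if \[ \frac{2\,\lambda_{\max}(M_c'')}{\lambda_{\min}(M_o')}\;\le\;\eta, \] then both $M_f^{(0)}$ and $M_f^{(1)}$ are density matrices.
   Context: Let $d_1\ge d_2\ge 1$ be integers, $\mathcal H_M=(\mathbb C^2)^{\otimes d_1}$, $\mathcal H_{M_c}=(\mathbb C^2)^{\otimes d_2}$. For $n\ge 1$ and $k\in\{0,1\}^{2n}$ let $U_k=\bigotimes_{j=1}^{n}X^{k_{2j-1}}Z^{k_{2j}}$ with $X,Z$ the Pauli matrices. Let $M_o$ be a strictly positive definite density matrix on $\mathcal H_M$ and $M_c$ a density matrix on $\mathcal H_{M_c}$. For keys $k\in\{0,1\}^{2d_1}$, $k'\in\{0,1\}^{2d_2}$ put $M_o'=U_kM_oU_k^\dagger$, $M_c'=U_{k'}M_cU_{k'}^\dagger$, let $V|\psi\rangle=|\psi\rangle\otimes|0\rangle^{\otimes(d_1-d_2)}$ (isometry $\mathcal H_{M_c}\to\mathcal H_M$) and $M_c''=VM_c'V^\dagger$. On $\mathbb C^2\otimes\mathcal H_M$ (blocks w.r.t. the first qubit) \[ M_a^{(0)}=\begin{pmatrix}\tfrac12M_o'&0\\0&\tfrac12M_o'\end{pmatrix},\qquad M_a^{(1)}=\begin{pmatrix}\tfrac12M_o'&\tfrac1\eta M_c''\\ \tfrac1\eta (M_c'')^\dagger&\tfrac12M_o'\end{pmatrix},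 \] and $M_f^{(b)}=U_\sigma M_a^{(b)}U_\sigma^\dagger$ for a $2^{d_1+1}\times 2^{d_1+1}$ permutation matrix $U_\sigma$. $\lambda_{\min}(M_o')$ and $\lambda_{\max}(M_c'')$ denote the smallest eigenvalue of $M_o'$ and the largest eigenvalue of $M_c''$ (on their supports). *)

(* complex scalars are an arbitrary numClosedFieldType C
   (e.g. algC or complex numbers). *)
From HB Require Import structures.
From mathcomp Require Import all_boot all_order perm all_algebra.
From mathcomp Require Import mxtens.

Set Implicit Arguments.
Unset Strict Implicit.
Unset Printing Implicit Defensive.

Import Order.TTheory GRing.Theory Num.Theory.
Local Open Scope ring_scope.

Section Defs.
Variable C : numClosedFieldType.

Definition adj {m n} (A : 'M[C]_(m, n)) : 'M[C]_(n, m) := (map_mx Num.conj A)^T.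

Definition hermitian {n} (A : 'M[C]_n) : Prop := adj A = A.

Definition psd {n} (A : 'M[C]_n) : Prop :=
  forall x : 'cV[C]_n, 0 <= (adj x *m A *m x) 0 0.

Definition pd {n} (A : 'M[C]_n) : Prop :=
  forall x : 'cV[C]_n, x != 0 -> 0 < (adj x *m A *m x) 0 0.

Definition density {n} (A : 'M[C]_n) : Prop :=
  hermitian A /\ psd A /\ \tr A = 1.

Definition is_lambda_min {n} (A : 'M[C]_n) (l : C) : Prop :=
  eigenvalue A l /\ forall a, eigenvalue A a -> l <= a.
Definition is_lambda_max {n} (A : 'M[C]_n) (l : C) : Prop :=
  eigenvalue A l /\ forall a, eigenvalue A a -> a <= l.

Definition pauliX : 'M[C]_2 := \matrix_(i, j) (i != j)%:R.
Definition pauliZ : 'M[C]_2 :=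
  \matrix_(i, j) (if i == j then (if (i : nat) == 0%N then 1 else -1) else 0).

Fixpoint ktens (n : nat) : (nat -> 'M[C]_2) -> 'M[C]_(2 ^ n) :=
  match n with
  | 0 => fun _ => 1%:M
  | n'.+1 => fun A =>
      castmx (esym (expnS 2 n'), esym (expnS 2 n'))
             (A 0%N *t ktens n' (fun q => A q.+1))
  end.

(* U_k = (x)_{j=1}^n X^{k_{2j-1}} Z^{k_{2j}}, k in {0,1}^{2n}
   (0-based: qubit q uses bits k_(2q) for X and k_(2q+1) for Z) *)
Definition pauliU (n : nat) (k : (2 * n).-tuple bool) : 'M[C]_(2 ^ n) :=
  ktens n (fun q => pauliX ^+ nth false k (2 * q) *m pauliZ ^+ nth false k (2 * q).+1).

(* V |psi> = |psi> (x) |0>^{(d1-d2)} : isometry H_{M_c} -> H_M *)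
Definition isoV (d1 d2 : nat) : 'M[C]_(2 ^ d1, 2 ^ d2) :=
  \matrix_(i, j) ((i : nat) == j * 2 ^ (d1 - d2))%N%:R.

(* M_a^(0) and M_a^(1), blocks w.r.t. the first qubit *)
Definition Ma0 {N} (Mo' : 'M[C]_N) : 'M[C]_(N + N) :=
  block_mx (2^-1 *: Mo') 0 0 (2^-1 *: Mo').
Definition Ma1 {N} (Mo' Mc'' : 'M[C]_N) (eta : nat) : 'M[C]_(N + N) :=
  block_mx (2^-1 *: Mo') ((eta%:R)^-1 *: Mc'')
           ((eta%:R)^-1 *: adj Mc'') (2^-1 *: Mo').

End Defs.

(* Conjugation by a unitary (the Pauli masks U_k, U_k' and the permutation U_sigma)
   preserves density matrices, and any congruence S A S^+ preserves Hermitian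
   positive semidefinite matrices, so M_c'' is Hermitian PSD.  For x = (a, b),
     x^+ M_a^(1) x = (a^+ M_o' a + b^+ M_o' b)/2 + (a^+ M_c'' b + b^+ M_c'' a)/eta,
   and since (a + b)^+ M_c'' (a + b) >= 0 the cross term is at least
   -(a^+ M_c'' a + b^+ M_c'' b)/eta.  The Rayleigh bounds then give
   x^+ M_a^(1) x >= (lmin/2 - lmax/eta) (|a|^2 + |b|^2) >= 0, where lmin > 0
   because M_o' is positive definite.  M_a^(0) is the case without off-diagonal
   blocks. *)

From Pilot Require Import Defs.
From HB Require Import structures.
From mathcomp Require Import all_boot all_order perm all_algebra.
From mathcomp Require Import mxtens ring.
Import Order.TTheory GRing.Theory Num.Theory.
Local Open Scope ring_scope.

Set Implicit Arguments.
Unset Strict Implicit.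

Section Adjoint.
Variable C : numClosedFieldType.
Local Open Scope sesquilinear_scope.

Lemma adjE m n (A : 'M[C]_(m, n)) : adj A = A ^t*.
Proof. exact: map_trmx. Qed.

Lemma adjK m n (A : 'M[C]_(m, n)) : adj (adj A) = A.
Proof. by apply/matrixP => i j; rewrite !mxE conjCK. Qed.

Lemma adj_mul m n p (A : 'M[C]_(m, n)) (B : 'M[C]_(n, p)) :
  adj (A *m B) = adj B *m adj A.
Proof. by rewrite /adj map_mxM trmx_mul. Qed.

Lemma adj_add m n (A B : 'M[C]_(m, n)) : adj (A + B) = adj A + adj B.
Proof. by apply/matrixP => i j; rewrite !mxE rmorphD. Qed.

Lemma adj_scale m n a (A : 'M[C]_(m, n)) : adj (a *: A) = a^* *: adj A.
Proof. by apply/matrixP => i j; rewrite !mxE rmorphM. Qed.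

Lemma adj0 m n : adj (0 : 'M[C]_(m, n)) = 0.
Proof. by rewrite /adj map_mx0 trmx0. Qed.

Lemma adj_block m1 m2 n1 n2 (A : 'M[C]_(m1, n1)) (B : 'M[C]_(m1, n2))
  (D : 'M[C]_(m2, n1)) (E : 'M[C]_(m2, n2)) :
  adj (block_mx A B D E) = block_mx (adj A) (adj D) (adj B) (adj E).
Proof. by rewrite /adj map_block_mx tr_block_mx. Qed.

Lemma adj_col m1 m2 n (A : 'M[C]_(m1, n)) (B : 'M[C]_(m2, n)) :
  adj (col_mx A B) = row_mx (adj A) (adj B).
Proof. by rewrite /adj map_col_mx tr_col_mx. Qed.

Lemma adj_tens m n p q (A : 'M[C]_(m, n)) (B : 'M[C]_(p, q)) :
  adj (A *t B) = adj A *t adj B.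
Proof. by rewrite /adj map_mxT trmx_tens. Qed.

Lemma adj_perm n (s : 'S_n) : adj (perm_mx s : 'M[C]_n) = perm_mx s^-1.
Proof. by rewrite /adj map_perm_mx tr_perm_mx. Qed.

Lemma conjC_natV (k : nat) : ((k%:R : C)^-1)^* = k%:R^-1.
Proof. by rewrite fmorphV rmorph_nat. Qed.

End Adjoint.

Section Unitary.
Variable C : numClosedFieldType.

Lemma unitarymx_adjP m n (U : 'M[C]_(m, n)) :
  reflect (U *m adj U = 1%:M) (U \is unitarymx).
Proof. by rewrite adjE; apply: unitarymxP. Qed.

Lemma unitarymx_adjK n (U : 'M[C]_n) : U \is unitarymx -> adj U *m U = 1%:M.
Proof. by move/unitarymx_adjP/mulmx1C. Qed.

Lemma unitarymx1 n : (1%:M : 'M[C]_n) \is unitarymx.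
Proof. by apply/unitarymxP; rewrite trmx1 map_mx1 mulmx1. Qed.

Lemma unitarymx_cast m n (e : m = n) (U : 'M[C]_m) :
  U \is unitarymx -> castmx (e, e) U \is unitarymx.
Proof. by case: n / e; rewrite castmx_id. Qed.

Lemma tensmx11 m n : (1%:M : 'M[C]_m) *t (1%:M : 'M[C]_n) = 1%:M.
Proof.
apply/matrixP => i j.
case: (mxtens_indexP i) => i0 i1; case: (mxtens_indexP j) => j0 j1.
rewrite tensmxE !mxE (inj_eq (can_inj (@mxtens_indexK _ _))) xpair_eqE.
by case: (i0 == j0); case: (i1 == j1); rewrite ?mulr1 ?mulr0.
Qed.

Lemma tensmx_unitarymx m n (U : 'M[C]_m) (V : 'M[C]_n) :
  U \is unitarymx -> V \is unitarymx -> U *t V \is unitarymx.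
Proof.
move=> /unitarymx_adjP hU /unitarymx_adjP hV; apply/unitarymx_adjP.
by rewrite adj_tens tensmx_mul hU hV tensmx11.
Qed.

Lemma ktens_unitarymx n (A : nat -> 'M[C]_2) :
  (forall q, A q \is unitarymx) -> ktens n A \is unitarymx.
Proof.
elim: n A => [|n IHn] A hA /=; first exact: unitarymx1.
by apply/unitarymx_cast/tensmx_unitarymx => //; apply: IHn.
Qed.

Lemma expr_unitarymx n (U : 'M[C]_n.+1) (b : bool) :
  U \is unitarymx -> U ^+ b \is unitarymx.
Proof. by case: b => hU; rewrite ?expr1 ?expr0 //; apply: unitarymx1. Qed.

Lemma pauliX_unitarymx : pauliX C \is unitarymx.
Proof.
apply/unitarymx_adjP/matrixP => i j; rewrite !mxE !big_ord_recl big_ord0 !mxE.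
by case: i => [[|[|//]]] ?; case: j => [[|[|//]]] ? /=;
  rewrite ?rmorph0 ?rmorph1 ?mulr0 ?mul0r ?mulr1 ?addr0 ?add0r.
Qed.

Lemma pauliZ_unitarymx : pauliZ C \is unitarymx.
Proof.
apply/unitarymx_adjP/matrixP => i j; rewrite !mxE !big_ord_recl big_ord0 !mxE.
by case: i => [[|[|//]]] ?; case: j => [[|[|//]]] ? /=;
  rewrite ?rmorph0 ?rmorph1 ?rmorphN1 ?mulr0 ?mul0r ?mulr1 ?addr0 ?add0r ?mulrNN ?mulr1.
Qed.

Lemma pauliU_unitarymx n (k : (2 * n).-tuple bool) : pauliU C k \is unitarymx.
Proof.
apply: ktens_unitarymx => q.
by apply: mul_unitarymx; apply: expr_unitarymx;
  [exact: pauliX_unitarymx | exact: pauliZ_unitarymx].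
Qed.

Lemma perm_mx_unitarymx n (s : 'S_n) : (perm_mx s : 'M[C]_n) \is unitarymx.
Proof. by apply/unitarymx_adjP; rewrite adj_perm -perm_mxM mulgV perm_mx1. Qed.

End Unitary.

Section QuadraticForms.
Variable C : numClosedFieldType.

Definition qform n (A : 'M[C]_n) (x y : 'cV[C]_n) : C := (adj x *m A *m y) 0 0.
Definition sqnorm n (x : 'cV[C]_n) : C := (adj x *m x) 0 0.

Lemma sqnormE n (x : 'cV[C]_n) : sqnorm x = \sum_i `|x i 0| ^+ 2.
Proof. by rewrite /sqnorm mxE; apply: eq_bigr => i _; rewrite !mxE mulrC -normCK. Qed.

Lemma sqnorm_ge0 n (x : 'cV[C]_n) : 0 <= sqnorm x.
Proof. by rewrite sqnormE; apply: sumr_ge0 => i _; apply: exprn_ge0. Qed.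

Lemma sqnorm_gt0 n (x : 'cV[C]_n) : x != 0 -> 0 < sqnorm x.
Proof.
move=> x_neq0; rewrite lt_def sqnorm_ge0 andbT sqnormE psumr_eq0; last first.
  by move=> i _; apply: exprn_ge0.
apply: contra x_neq0 => /allP x0; apply/eqP/matrixP => i j.
by rewrite ord1 mxE; apply/eqP; rewrite -normr_eq0 -sqrf_eq0 (eqP (x0 i _)) ?mem_index_enum.
Qed.

Lemma qformZ n a (A : 'M[C]_n) x y : qform (a *: A) x y = a * qform A x y.
Proof. by rewrite /qform -scalemxAr -scalemxAl mxE. Qed.

Lemma qform0 n (x y : 'cV[C]_n) : qform 0 x y = 0.
Proof. by rewrite /qform mulmx0 mul0mx mxE. Qed.

Lemma qformDD n (A : 'M[C]_n) (x y : 'cV[C]_n) :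
  qform A (x + y) (x + y) = qform A x x + qform A x y + qform A y x + qform A y y.
Proof. by rewrite /qform adj_add !mulmxDl !mulmxDr !mxE; ring. Qed.

Lemma qform_block N (A B D E : 'M[C]_N) (x : 'cV[C]_(N + N)) :
  let a := usubmx x in let b := dsubmx x in
  qform (block_mx A B D E) x x = qform A a a + qform B a b + qform D b a + qform E b b.
Proof.
move=> a b; rewrite /qform -[x]vsubmxK adj_col mul_row_block mul_row_col.
by rewrite !mulmxDl !mxE; ring.
Qed.

End QuadraticForms.

Section Congruence.
Variable C : numClosedFieldType.

Lemma hermitian_congr m n (S : 'M[C]_(m, n)) (A : 'M[C]_n) :
  Defs.hermitian A -> Defs.hermitian (S *m A *m adj S).
Proof. by rewrite /Defs.hermitian => hA; rewrite !adj_mul adjK hA mulmxA. Qed.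

Lemma psd_congr m n (S : 'M[C]_(m, n)) (A : 'M[C]_n) :
  psd A -> psd (S *m A *m adj S).
Proof. by move=> hA x; have := hA (adj S *m x); rewrite adj_mul adjK !mulmxA. Qed.

Lemma pd_congr n (U A : 'M[C]_n) : U \is unitarymx -> pd A -> pd (U *m A *m adj U).
Proof.
move=> /unitarymx_adjP hU hA x x_neq0; have := hA (adj U *m x).
rewrite adj_mul adjK !mulmxA; apply; apply: contra x_neq0 => /eqP Ux0.
by rewrite -[x]mul1mx -hU -mulmxA Ux0 mulmx0.
Qed.

Lemma mxtrace_congr n (U A : 'M[C]_n) : U \is unitarymx -> \tr (U *m A *m adj U) = \tr A.
Proof. by move=> /unitarymx_adjK hU; rewrite mxtrace_mulC mulmxA hU mul1mx. Qed.

Lemma density_congr n (U A : 'M[C]_n) : U \is unitarymx -> density A ->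
  density (U *m A *m adj U).
Proof.
move=> hU [hA [pA tA]]; split; first exact: hermitian_congr.
by split; [exact: psd_congr | rewrite mxtrace_congr].
Qed.

End Congruence.

Section Spectral.
Variable C : numClosedFieldType.

Lemma qform_eigenvalue_sum n (A : 'M[C]_n) (x : 'cV[C]_n) : Defs.hermitian A ->
  exists d w : 'I_n -> C, [/\ forall j, eigenvalue A (d j), forall j, 0 <= w j,
    sqnorm x = \sum_j w j & qform A x x = \sum_j d j * w j].
Proof.
move=> hA; have A_herm : A \is hermsymmx.
  by apply/is_hermitianmxP; rewrite expr0 scale1r -adjE hA.
have /hermitian_normalmx/orthomx_spectralP := A_herm.
have P_unitary := spectral_unitarymx A.
have PtP := unitarymx_adjK P_unitary; have /unitarymx_adjP PPt := P_unitary.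
rewrite invmx_unitary // -adjE.
move: (spectralmx A) (spectral_diag A) PtP PPt => P d PtP PPt Ae.
exists (fun j => d 0 j), (fun j => `|(P *m x) j 0| ^+ 2); split.
- move=> j; apply/eigenvalueP; exists (row j P).
    by rewrite {1}Ae -row_mul !mulmxA PPt mul1mx row_mul row_diag_mx -scalemxAl -rowE.
  apply: contraT => /negPn /eqP Pj0.
  have := PPt => /(congr1 (row j)); rewrite row_mul Pj0 mul0mx => /rowP/(_ j).
  by rewrite !mxE eqxx => /eqP; rewrite eq_sym oner_eq0.
- by move=> j; apply: exprn_ge0.
- by rewrite -sqnormE /sqnorm adj_mul mulmxA -(mulmxA (adj x)) PtP mulmx1.
- rewrite /qform Ae (_ : _ *m _ = adj (P *m x) *m diag_mx d *m (P *m x)).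
    by rewrite mxE; apply: eq_bigr => j _; rewrite mul_mx_diag !mxE normCK; ring.
  by rewrite adj_mul !mulmxA.
Qed.

Lemma rayleigh_lb n (A : 'M[C]_n) l x : Defs.hermitian A ->
  (forall a, eigenvalue A a -> l <= a) -> l * sqnorm x <= qform A x x.
Proof.
move=> hA hl; have [d [w [dE w_ge0 -> ->]]] := qform_eigenvalue_sum x hA.
by rewrite mulr_sumr; apply: ler_sum => j _; apply: ler_wpM2r (hl _ (dE j)).
Qed.

Lemma rayleigh_ub n (A : 'M[C]_n) l x : Defs.hermitian A ->
  (forall a, eigenvalue A a -> a <= l) -> qform A x x <= l * sqnorm x.
Proof.
move=> hA hl; have [d [w [dE w_ge0 -> ->]]] := qform_eigenvalue_sum x hA.
by rewrite mulr_sumr; apply: ler_sum => j _; apply: ler_wpM2r (hl _ (dE j)).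
Qed.

Lemma pd_eigenvalue_gt0 n (A : 'M[C]_n) l : pd A -> eigenvalue A l -> 0 < l.
Proof.
move=> pA /eigenvalueP [v vA v_neq0].
have adjv_neq0 : adj v != 0.
  by apply: contra v_neq0 => /eqP v0; rewrite -[v]adjK v0 adj0.
have := pA _ adjv_neq0; rewrite adjK vA -scalemxAl mxE pmulr_lgt0 //.
by have := sqnorm_gt0 adjv_neq0; rewrite /sqnorm adjK.
Qed.

Lemma eigenvalue_ratio_qform_le n (A B : 'M[C]_n) (eta : nat) lmin lmax x :
  Defs.hermitian A -> Defs.hermitian B ->
  (forall a, eigenvalue A a -> lmin <= a) -> (forall a, eigenvalue B a -> a <= lmax) ->
  (0 < eta)%N -> 0 < lmin -> 2 * lmax / lmin <= eta%:R ->
  2 * qform (eta%:R^-1 *: B) x x <= qform A x x.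
Proof.
move=> hA hB lminA lmaxB eta_gt0 lmin_gt0 ratio_le.
have e_gt0 : 0 < (eta%:R : C) by rewrite ltr0n.
have lmax_le : 2 * lmax / eta%:R <= lmin.
  by rewrite ler_pdivrMr // [lmin * _]mulrC -ler_pdivrMr.
rewrite qformZ; apply: le_trans (rayleigh_lb x hA lminA).
apply: le_trans (ler_wpM2r (sqnorm_ge0 x) lmax_le).
have -> : 2 * lmax / eta%:R * sqnorm x = 2 * (eta%:R^-1 * (lmax * sqnorm x)).
  by ring.
apply: ler_wpM2l; first exact: ler0n.
by apply: ler_wpM2l; [rewrite invr_ge0 ler0n | exact: rayleigh_ub].
Qed.

End Spectral.

Section Blocks.
Variable C : numClosedFieldType.

Lemma psd_scale N a (A : 'M[C]_N) : 0 <= a -> psd A -> psd (a *: A).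
Proof. by move=> a_ge0 pA x; rewrite -scalemxAr -scalemxAl mxE mulr_ge0. Qed.

Lemma psd_block_sym N (A B : 'M[C]_N) :
  psd B -> (forall x, qform B x x <= qform A x x) -> psd (block_mx A B B A).
Proof.
move=> pB BleA x; change (0 <= qform (block_mx A B B A) x x).
rewrite qform_block; set a := usubmx x; set b := dsubmx x.
have -> : qform A a a + qform B a b + qform B b a + qform A b b =
    (qform A a a - qform B a a) + (qform A b b - qform B b b) + qform B (a + b) (a + b).
  by rewrite qformDD; ring.
by apply: addr_ge0; [apply: addr_ge0; rewrite subr_ge0 BleA | apply: pB].
Qed.

Lemma density_block_half N (A B : 'M[C]_N) :
  density A -> Defs.hermitian B -> psd B -> (forall x, 2 * qform B x x <= qform A x x) ->
  density (block_mx (2^-1 *: A) B B (2^-1 *: A)).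
Proof.
move=> [hA [_ trA]] hB pB BleA; split; [|split].
- by rewrite /Defs.hermitian adj_block adj_scale hA hB conjC_natV.
- apply: psd_block_sym => // x.
  by rewrite qformZ ler_pdivlMl ?ltr0n.
- by rewrite mxtrace_block mxtraceZ trA mulr1 [RHS](splitr 1) mul1r.
Qed.

End Blocks.

Unset Implicit Arguments.

Theorem corollary5 (C : numClosedFieldType) (d1 d2 : nat)
  (hd : (1 <= d2 <= d1)%N)
  (Mo : 'M[C]_(2 ^ d1)) (Mc : 'M[C]_(2 ^ d2))
  (hMo : density Mo) (hMo_pd : pd Mo) (hMc : density Mc)
  (k : (2 * d1).-tuple bool) (k' : (2 * d2).-tuple bool)
  (sigma : 'S_(2 ^ d1 + 2 ^ d1))
  (eps : C) (eta : nat) (heps : 0 < eps) (heta : (0 < eta)%N)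
  (heta_eps : (eta%:R)^-1 < eps)
  (lmin lmax : C) :
  let Mo' := pauliU C k *m Mo *m adj (pauliU C k) in
  let Mc' := pauliU C k' *m Mc *m adj (pauliU C k') in
  let Mc'' := isoV C d1 d2 *m Mc' *m adj (isoV C d1 d2) in
  let Us := perm_mx sigma : 'M[C]_(2 ^ d1 + 2 ^ d1) in
  is_lambda_min Mo' lmin -> is_lambda_max Mc'' lmax ->
  2 * lmax / lmin <= eta%:R ->
  density (Us *m Ma0 Mo' *m adj Us) /\
  density (Us *m Ma1 Mo' Mc'' eta *m adj Us).
Proof.
move=> Mo' Mc' Mc'' Us [lmin_eig lmin_le] [_ lmax_ge] ratio_le.
have Uk := pauliU_unitarymx C k.
have dMo' : density Mo' := density_congr Uk hMo.
have [hMo' [pMo' _]] := dMo'.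
have [hMc_herm [pMc _]] := hMc.
have hMc'' : Defs.hermitian Mc'' by do 2 apply: hermitian_congr.
have pMc'' : psd Mc'' by do 2 apply: psd_congr.
have lmin_gt0 : 0 < lmin := pd_eigenvalue_gt0 (pd_congr Uk hMo_pd) lmin_eig.
split; apply: density_congr (perm_mx_unitarymx C sigma) _.
- apply: density_block_half => // [|x|x].
  + by rewrite /Defs.hermitian adj0.
  + by rewrite mulmx0 mul0mx mxE.
  + by rewrite qform0 mulr0; exact: pMo'.
- rewrite /Ma1 hMc''; apply: density_block_half => // [||x].
  + by rewrite /Defs.hermitian adj_scale hMc'' conjC_natV.
  + by apply: psd_scale; rewrite ?invr_ge0 ?ler0n.
  + exact: eigenvalue_ratio_qform_le hMo' hMc'' lmin_le lmax_ge heta lmin_gt0 ratio_le.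
Qed.
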